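(* Let $n=2$. For every pair of distributions $G_1,G_2$ satisfying the standing assumptions, at least one of the qualified majority rules $f^{(1)}$ or $f^{(2)}$ solves program (OPT). In particular, the maximal expected welfare in (OPT) is achieved by an ordinal SCF.
   Context: There are $n\ge 2$ agents $N=\{1,\dots,n\}$ choosing between a Reform $R$ and the Status quo $S$. Agent $i$ gets utility $0$ if $S$ is chosen and utility $v_i\in\mathbb{R}$ if $R$ is chosen. Values are independent random variables $\tilde v_1,\dots,\tilde v_n$, $\tilde v_i\sim G_i$ (Borel probability distributions on $\mathbb{R}$, $G_i(0)=\Pr(\tilde v_i\le 0)$). Standing assumptions: all $\tilde v_i$ have the same support $V$ with $0\notin V$; $\mathbb{E}|\tilde v_i|<\infty$; $p_i:=1-G_i(0)\in(0,1)$. The distributions need not be identical. An SCF is a Borel measurable $f:V^n\to[0,1]$ (probability of choosing $R$). $f$ is anonymous if $f(v)=f(\pi v)$ for every $v\in V^n$ and every permutation $\pi$ of $N$, where $\pi v=(v_{\pi(1)},\dots,v_{\pi(n)})$. $f$ is BIC if for every $i$ and all $v_i,v_i'\in V$: $v_i\,\mathbb{E}(f(v_i,\tilde v_{-i}))\ge v_i\,\mathbb{E}(f(v_i',\tilde v_{-i}))$ (expectation over $\tilde v_{-i}=(\tilde v_j)_{j\neq i}$). Expected welfare is $W(f)=\mathbb{E}\big(f(\tilde v)\sum_{i=1}^n\tilde v_i\big)$. Program (OPT): maximize $W(f)$ subject to $f$ being anonymous and BIC. For $v\in V^n$ let $\chi(v)=\{i\in N: v_i>0\}$. $f$ is ordinal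 if $f(v)=f(v')$ whenever $\chi(v)=\chi(v')$. For $k\in\{1,\dots,n\}$, the qualified majority rule $f^{(k)}$ is $f^{(k)}(v)=1$ if $|\chi(v)|\ge k$ and $f^{(k)}(v)=0$ otherwise. *)

From HB Require Import structures.
From mathcomp Require Import all_boot all_order all_algebra.
From mathcomp Require Import all_classical all_reals all_analysis.
Set Implicit Arguments. Unset Strict Implicit. Unset Printing Implicit Defensive.
Import Order.TTheory GRing.Theory Num.Theory.
Import numFieldNormedType.Exports.
Local Open Scope classical_set_scope.
Local Open Scope ring_scope.

Section Defs.
Variable R : realType.

Definition dsupport (mu : probability R R) : set R :=
  [set x : R | forall e : R, 0 < e -> (0 < mu `](x - e)%R, (x + e)%R[%classic)%E].

(* A social choice function for n = 2, on the profile space V^2 (V the common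
   support).  It is represented as a function on R * R; only its values on
   V * V matter. *)
Definition is_SCF (V : set R) (f : R * R -> R) : Prop :=
  measurable_fun setT f /\ forall v, V v.1 -> V v.2 -> 0 <= f v <= 1.

Definition anonymous (V : set R) (f : R * R -> R) : Prop :=
  forall x y, V x -> V y -> f (x, y) = f (y, x).

Definition interim1 (G2 : probability R R) (f : R * R -> R) (x : R) : \bar R :=
  (\int[G2]_y (f (x, y))%:E)%E.
Definition interim2 (G1 : probability R R) (f : R * R -> R) (y : R) : \bar R :=
  (\int[G1]_x (f (x, y))%:E)%E.

Definition BIC (V : set R) (G1 G2 : probability R R) (f : R * R -> R) : Prop :=
  (forall v v', V v -> V v' ->
     (v%:E * interim1 G2 f v' <= v%:E * interim1 G2 f v)%E) /\
  (forall v v', V v -> V v' ->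
     (v%:E * interim2 G1 f v' <= v%:E * interim2 G1 f v)%E).

Definition welfare (G1 G2 : probability R R) (f : R * R -> R) : \bar R :=
  (\int[(G1 \x G2)%E]_v (f v * (v.1 + v.2))%:E)%E.

(* chi(v) = set of agents with positive value; here its cardinality. *)
Definition nb_pos (v : R * R) : nat := ((0 < v.1)%R + (0 < v.2)%R)%N.

Definition qmaj (k : nat) (v : R * R) : R := if (k <= nb_pos v)%N then 1 else 0.

Definition ordinal_scf (V : set R) (f : R * R -> R) : Prop :=
  forall v w, V v.1 -> V v.2 -> V w.1 -> V w.2 ->
    (0 < v.1) = (0 < w.1) -> (0 < v.2) = (0 < w.2) -> f v = f w.

Definition solves_OPT (V : set R) (G1 G2 : probability R R) (f : R * R -> R) : Prop :=
  [/\ is_SCF V f, anonymous V f, BIC V G1 G2 f &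
     forall g, is_SCF V g -> anonymous V g -> BIC V G1 G2 g ->
       (welfare G1 G2 g <= welfare G1 G2 f)%E].

Definition standing (G1 G2 : probability R R) : Prop :=
  [/\ dsupport G1 = dsupport G2, ~ dsupport G1 0,
      G1.-integrable setT (EFin \o id) /\ G2.-integrable setT (EFin \o id),
      (0 < G1 `]0%R, +oo[%classic < 1)%E &
      (0 < G2 `]0%R, +oo[%classic < 1)%E].

End Defs.

From HB Require Import structures.
From mathcomp Require Import all_boot all_order all_algebra.
From mathcomp Require Import all_classical all_reals all_analysis.
From mathcomp Require Import measurable_realfun.
From mathcomp Require Import ring lra.
Import Order.TTheory GRing.Theory Num.Theory.
Local Open Scope classical_set_scope.
Local Open Scope ring_scope.

(* Clamping and symmetrizing an anonymous BIC rule changes neither its welfare nor its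
   interim probabilities on the common support V.  As 0 is not in V, incentive
   compatibility makes each interim probability a step function of the sign of the type:
   X_i on positive and Y_i on negative types.  The welfare is then
   X_1 a_1 + Y_1 b_1 + X_2 a_2 + Y_2 b_2, where a_i >= 0 >= b_i are the contributions of
   positive and negative values to E v_i.  Feasibility of a symmetric rule
   (P(v_1 > 0 and R) <= P(v_1, v_2 > 0) + P(v_2 <= 0 and R), and its three variants)
   forces (X, Y) to be dominated, in the direction favoured by the signs of a and b, by the
   interim vector of a lottery between f^(1) and f^(2), whose welfare is a convex
   combination of W(f^(1)) and W(f^(2)). *)

Section Interim.
Context {R : realType}.
Implicit Types (mu nu : probability R R) (g : R * R -> R).

Definition symmetric_fun g := forall x y, g (x, y) = g (y, x).
Definition unit_valued g := forall v, 0 <= g v <= 1.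

Lemma unit_valued_ge0 {g} : unit_valued g -> forall v, 0 <= g v.
Proof. by move=> ug v; case/andP: (ug v). Qed.

Lemma unit_valued_le1 {g} : unit_valued g -> forall v, g v <= 1.
Proof. by move=> ug v; case/andP: (ug v). Qed.

Lemma integral_cst_probability mu (c : \bar R) : (\int[mu]_x c = c)%E.
Proof. by rewrite integral_cst // [X in (_ * X)%E]probability_setT mule1. Qed.

Lemma measurable_section1 {g t} : measurable_fun setT g ->
  measurable_fun setT (fun y => g (t, y)).
Proof. by move=> mg; exact: measurableT_comp mg (pair1_measurable t). Qed.

Lemma measurable_section2 {g t} : measurable_fun setT g ->
  measurable_fun setT (fun x => g (x, t)).
Proof. by move=> mg; exact: measurableT_comp mg (pair2_measurable t). Qed.

Lemma interim2_sym mu g : symmetric_fun g -> interim2 mu g = interim1 mu g.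
Proof. by move=> sg; apply/funext => t; apply: eq_integral => x _; rewrite sg. Qed.

Lemma interim1_ge0 nu g t : (forall v, 0 <= g v) -> (0 <= interim1 nu g t)%E.
Proof. by move=> g0; apply: integral_ge0 => y _; rewrite lee_fin. Qed.

Lemma interim1_le1 nu g t : measurable_fun setT g -> unit_valued g ->
  (interim1 nu g t <= 1)%E.
Proof.
move=> mg ug; rewrite -(integral_cst_probability nu 1).
apply: ge0_le_integral => //.
- by move=> y _; rewrite lee_fin unit_valued_ge0.
- by apply/measurable_EFinP; exact: measurable_section1.
- by move=> y _; rewrite lee_fin unit_valued_le1.
Qed.

Lemma interim1_fineK nu g t : measurable_fun setT g -> unit_valued g ->
  interim1 nu g t = (fine (interim1 nu g t))%:E.
Proof.
move=> mg ug; rewrite fineK // ge0_fin_numE.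
  exact: le_lt_trans (interim1_le1 _ _ _ mg ug) (ltey _).
exact/interim1_ge0/unit_valued_ge0.
Qed.

Lemma measurable_interim1 nu g : measurable_fun setT g -> (forall v, 0 <= g v) ->
  measurable_fun setT (interim1 nu g).
Proof.
move=> mg g0; apply: (measurable_fun_fubini_tonelli_F (fun v => (g v)%:E)).
  exact/measurable_EFinP.
by move=> v; rewrite lee_fin.
Qed.

Lemma integrable_section1 nu g t : measurable_fun setT g -> unit_valued g ->
  nu.-integrable setT (fun y => (g (t, y))%:E).
Proof.
move=> mg ug.
apply: (@le_integrable _ _ _ _ _ measurableT _ (EFin \o cst 1)).
- by apply/measurable_EFinP; exact: measurable_section1.
- move=> y _ /=; rewrite lee_fin ger0_norm ?unit_valued_ge0 //.
  by rewrite normr1 unit_valued_le1.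
- exact: finite_measure_integrable_cst.
Qed.

Lemma integral_prod_fst mu nu g (k : R -> R) :
  measurable_fun setT g -> (forall v, 0 <= g v) ->
  measurable_fun setT k -> (forall t, 0 <= k t) ->
  (\int[mu \x nu]_v (k v.1 * g v)%:E = \int[mu]_t ((k t)%:E * interim1 nu g t))%E.
Proof.
move=> mg g0 mk k0; rewrite fubini_tonelli1 /=; last 2 first.
- apply/measurable_EFinP; apply: measurable_funM => //.
  exact: measurableT_comp mk measurable_fst.
- by move=> v; rewrite lee_fin mulr_ge0.
apply: eq_integral => t _; rewrite /fubini_F /interim1.
under eq_integral => y _ do rewrite EFinM /=.
rewrite ge0_integralZl ?lee_fin // => [|y _]; last by rewrite lee_fin.
by apply/measurable_EFinP; exact: measurable_section1.
Qed.

Lemma integral_prod_snd mu nu g (k : R -> R) :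
  measurable_fun setT g -> (forall v, 0 <= g v) -> symmetric_fun g ->
  measurable_fun setT k -> (forall t, 0 <= k t) ->
  (\int[mu \x nu]_v (k v.2 * g v)%:E = \int[nu]_t ((k t)%:E * interim1 mu g t))%E.
Proof.
move=> mg g0 sg mk k0; rewrite fubini_tonelli2 /=; last 2 first.
- apply/measurable_EFinP; apply: measurable_funM => //.
  exact: measurableT_comp mk measurable_snd.
- by move=> v; rewrite lee_fin mulr_ge0.
apply: eq_integral => t _; rewrite /fubini_G /interim1.
under eq_integral => y _ do rewrite EFinM /= sg.
rewrite ge0_integralZl ?lee_fin // => [|y _]; last by rewrite lee_fin.
by apply/measurable_EFinP; exact: measurable_section1.
Qed.

(* Pointwise, [\1_A x * g (x, y) <= \1_(A `*` A) (x, y) + \1_(~` A) y * g (x, y)]. *)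
Lemma interim1_feasible mu nu g (A : set R) : measurable A ->
  measurable_fun setT g -> unit_valued g -> symmetric_fun g ->
  (\int[mu]_t ((\1_A t)%:E * interim1 nu g t) <=
   mu A * nu A + \int[nu]_t ((\1_(~` A) t)%:E * interim1 mu g t))%E.
Proof.
move=> mA mg ug sg; have g0 := unit_valued_ge0 ug.
have mAC : measurable (~` A) by exact: measurableC.
have mIA : measurable_fun setT (\1_A : R -> R) := measurable_indic mA.
have mIAC : measurable_fun setT (\1_(~` A) : R -> R) := measurable_indic mAC.
have mIA2 : measurable_fun setT (fun v : R * R => (\1_(A `*` A) v : R)%:E).
  by apply/measurable_EFinP; apply: measurable_indic; exact: measurableX.
have mAC2 : measurable_fun setT (fun v : R * R => (\1_(~` A) v.2 * g v)%:E).
  apply/measurable_EFinP; apply: measurable_funM => //.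
  exact: measurableT_comp mIAC measurable_snd.
rewrite -integral_prod_fst // -integral_prod_snd //.
rewrite -[X in (_ <= X + _)%E](_ : \int[mu \x nu]_v (\1_(A `*` A) v)%:E = _)%E;
  last by rewrite integral_indic ?setIT; [exact: product_measure1E | | exact: measurableX].
rewrite -ge0_integralD //; last by move=> v _; rewrite lee_fin mulr_ge0.
apply: ge0_le_integral => //.
- by move=> v _; rewrite lee_fin mulr_ge0.
- apply/measurable_EFinP; apply: measurable_funM => //.
  exact: measurableT_comp mIA measurable_fst.
- exact: emeasurable_funD.
move=> [x y] _ /=; rewrite -EFinD lee_fin !indicE in_setX in_setC /=.
have := ug (x, y) => /andP [gxy0 gxy1].
by case: (x \in A); case: (y \in A); rewrite /= ?mul0r ?mul1r ?add0r ?addr0.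
Qed.

Lemma integrable_prod_fst mu nu : mu.-integrable setT (EFin \o id) ->
  (mu \x nu)%E.-integrable setT (fun v : R * R => (v.1)%:E).
Proof.
move=> /integrableP [_ imu]; apply/integrableP; split.
  by apply/measurable_EFinP; exact: measurable_fst.
rewrite fubini_tonelli1 //=; last first.
  by apply/measurable_EFinP; apply: measurableT_comp => //; exact: measurable_fst.
rewrite /fubini_F /=; under eq_integral => t _ do rewrite integral_cst_probability.
exact: imu.
Qed.

Lemma integrable_prod_snd mu nu : nu.-integrable setT (EFin \o id) ->
  (mu \x nu)%E.-integrable setT (fun v : R * R => (v.2)%:E).
Proof.
move=> /integrableP [_ inu]; apply/integrableP; split.
  by apply/measurable_EFinP; exact: measurable_snd.
rewrite fubini_tonelli2 //=; last first.
  by apply/measurable_EFinP; apply: measurableT_comp => //; exact: measurable_snd.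
rewrite /fubini_G /=; under eq_integral => t _ do rewrite integral_cst_probability.
exact: inu.
Qed.

Lemma welfare_interimE mu nu g :
  measurable_fun setT g -> unit_valued g -> symmetric_fun g ->
  mu.-integrable setT (EFin \o id) -> nu.-integrable setT (EFin \o id) ->
  welfare mu nu g =
  (\int[mu]_t (t%:E * interim1 nu g t) + \int[nu]_t (t%:E * interim1 mu g t))%E.
Proof.
move=> mg ug sg imu inu; have g0 := unit_valued_ge0 ug.
have gv_le (c : R) v : (`|(g v * c)%:E| <= `|c%:E|)%E.
  by rewrite lee_fin normrM ler_piMl // ger0_norm ?unit_valued_le1.
have i1 : (mu \x nu)%E.-integrable setT (fun v : R * R => (g v * v.1)%:E).
  apply: (@le_integrable _ _ _ _ _ measurableT _ (fun v : R * R => (v.1)%:E)).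
  - by apply/measurable_EFinP; apply: measurable_funM => //; exact: measurable_fst.
  - by move=> v _; exact: gv_le.
  - exact: integrable_prod_fst.
have i2 : (mu \x nu)%E.-integrable setT (fun v : R * R => (g v * v.2)%:E).
  apply: (@le_integrable _ _ _ _ _ measurableT _ (fun v : R * R => (v.2)%:E)).
  - by apply/measurable_EFinP; apply: measurable_funM => //; exact: measurable_snd.
  - by move=> v _; exact: gv_le.
  - exact: integrable_prod_snd.
rewrite /welfare; under eq_integral => v _ do rewrite mulrDr EFinD.
rewrite integralD // -(integral12_prod_meas1 i1) -(integral21_prod_meas1 i2).
congr (_ + _)%E; apply: eq_integral => t _; rewrite /fubini_F /fubini_G /=.
- under eq_integral => y _ do rewrite EFinM.
  by rewrite integralZr ?integrable_section1 // muleC.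
- under eq_integral => y _ do rewrite EFinM sg.
  by rewrite integralZr ?integrable_section1 // muleC.
Qed.

End Interim.

Section Support.
Context {R : realType}.

Definition rat_ball (q : rat) (k : nat) : set R :=
  `](ratr q - k.+1%:R^-1), (ratr q + k.+1%:R^-1)[%classic.

Lemma rat_ball_approx (x e : R) : 0 < e ->
  exists q k, rat_ball q k x /\ rat_ball q k `<=` `](x - e), (x + e)[%classic.
Proof.
move=> e0; pose k := Num.truncn (2 / e); set d : R := k.+1%:R^-1.
have d0 : 0 < d by rewrite invr_gt0 ltr0n.
have de : d < e / 2.
  have : 2 / e < k.+1%:R := truncnS_gt _.
  rewrite ltr_pdivrMr // => ke.
  by rewrite /d ltr_pdivlMr // mulrC ltr_pdivrMr ?ltr0n // mulrC.
have [q] := @rat_in_itvoo R (x - d) (x + d) ltac:(lra).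
rewrite in_itv /= => /andP [q1 q2]; exists q, k; split.
  by rewrite /rat_ball /= in_itv /= -/d; apply/andP; split; lra.
move=> y; rewrite /rat_ball /= !in_itv /= -/d => /andP [y1 y2].
by apply/andP; split; lra.
Qed.

(* The complement of the support is covered by the countably many null rational balls. *)
Lemma dsupport_ae (mu : probability R R) : {ae mu, forall t, dsupport mu t}.
Proof.
pose F n : set R := if unpickle n is Some (q, k) then
  (if mu (rat_ball q k) == 0%E then rat_ball q k else set0) else set0.
have nF n : mu.-negligible (F n).
  rewrite /F; case: (unpickle n) => [[q k]|]; last exact: negligible_set0.
  case: eqP => [null|_]; last exact: negligible_set0.
  by exists (rat_ball q k); split => //; exact: measurable_itv.
apply: negligibleS (negligible_bigcup nF) => x /= /existsNP [e /not_implyP [e0 He]].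
have ball0 : mu `](x - e), (x + e)[%classic = 0%E.
  by apply/eqP; rewrite eq_le measure_ge0 andbT leNgt; exact/negP.
have [q [k [xB Bsub]]] := rat_ball_approx x e e0.
have null : mu (rat_ball q k) = 0%E.
  apply/eqP; rewrite eq_le measure_ge0 andbT -ball0.
  by apply: le_measure => //; rewrite inE; exact: measurable_itv.
exists (pickle (q, k)); first by [].
by rewrite /F pickleK null eqxx.
Qed.

End Support.

Section SignParts.
Context {R : realType}.
Implicit Types (mu nu : probability R R) (V : set R) (g : R * R -> R).

Lemma ae_exists {mu V} {A : set R} : {ae mu, forall t, V t} -> measurable A ->
  (0 < mu A)%E -> exists t, V t /\ A t.
Proof.
move=> [S [mS S0 VS]] mA; apply: contraPP => /forallNP nVA.
apply/negP; rewrite -leNgt -S0; apply: le_measure; rewrite ?inE // => t At.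
by apply: VS => /= Vt; exact: nVA t (conj Vt At).
Qed.

Lemma integral_indic_mul_ae_cst (c : R) {mu V} {A : set R} {h : R -> \bar R} :
  {ae mu, forall t, V t} -> measurable A -> measurable_fun setT h ->
  (forall t, V t -> A t -> h t = c%:E) ->
  (\int[mu]_t ((\1_A t)%:E * h t) = c%:E * mu A)%E.
Proof.
move=> hV mA mh hc.
have mIA : measurable_fun setT (fun t => (\1_A t : R)%:E).
  exact/measurable_EFinP/measurable_indic.
transitivity (\int[mu]_t ((\1_A t)%:E * c%:E))%E.
  apply: ae_eq_integral => //; [exact: emeasurable_funM | exact: emeasurable_funM |].
  apply: filterS hV => t Vt _; rewrite indicE.
  have [tA|_] := boolP (t \in A); last by rewrite !mul0e.
  by rewrite hc //; exact/set_mem.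
rewrite integralZr //; last exact: integrable_indic.
by rewrite integral_indic // setIT muleC.
Qed.

Definition positives : set R := `]0%R, +oo[%classic.

Lemma positivesE t : positives t = (0 < t).
Proof. by rewrite /positives /= in_itv /= andbT. Qed.

Lemma in_positives t : (t \in positives) = (0 < t).
Proof.
by apply/idP/idP => [/set_mem|t0]; [rewrite positivesE | apply/mem_set; rewrite positivesE].
Qed.

Lemma measurable_positives : measurable positives.
Proof. exact: measurable_itv. Qed.

Definition prob_pos mu : R := fine (mu positives).
Definition mean_pos mu : R := fine (\int[mu]_t (t * \1_positives t)%:E)%E.
Definition mean_npos mu : R := fine (\int[mu]_t (t * \1_(~` positives) t)%:E)%E.

Lemma probability_fineK mu (B : set R) : measurable B -> mu B = (fine (mu B))%:E.
Proof.
move=> mB; rewrite fineK // ge0_fin_numE //.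
exact: le_lt_trans (probability_le1 mu mB) (ltey _).
Qed.

Lemma prob_posE mu : mu positives = (prob_pos mu)%:E.
Proof. exact: probability_fineK measurable_positives. Qed.

Lemma prob_pos_ge0 mu : 0 <= prob_pos mu.
Proof. by rewrite /prob_pos fine_ge0. Qed.

Lemma prob_pos_le1 mu : prob_pos mu <= 1.
Proof. by rewrite -lee_fin -prob_posE probability_le1 //; exact: measurable_positives. Qed.

Lemma probability_npos mu : mu (~` positives) = (1 - prob_pos mu)%:E.
Proof. by rewrite probability_setC ?prob_posE //; exact: measurable_positives. Qed.

Lemma integrable_mul_indic {mu} {B : set R} : measurable B ->
  mu.-integrable setT (EFin \o id) -> mu.-integrable setT (fun t => (t * \1_B t)%:E).
Proof.
move=> mB imu; apply: (@le_integrable _ _ _ _ _ measurableT _ (EFin \o id)) => //.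
- by apply/measurable_EFinP; apply: measurable_funM => //; exact: measurable_indic.
- move=> t _ /=; rewrite lee_fin normrM indicE.
  by case: (t \in B); rewrite ?normr1 ?normr0 ?mulr1 ?mulr0.
Qed.

Lemma mean_pos_ge0 mu : 0 <= mean_pos mu.
Proof.
rewrite /mean_pos fine_ge0 //; apply: integral_ge0 => t _.
by rewrite lee_fin indicE in_positives; case: ltP => t0; rewrite ?mulr1 ?mulr0 // ltW.
Qed.

Lemma mean_npos_le0 mu : mu.-integrable setT (EFin \o id) -> mean_npos mu <= 0.
Proof.
move=> imu; rewrite /mean_npos fine_le0 // -(integral0 mu setT).
apply: le_integral => //.
- apply: integrable_mul_indic imu; exact: measurableC measurable_positives.
- exact: (finite_measure_integrable_cst _ 0).
- move=> t _; rewrite lee_fin indicE in_setC in_positives.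
  by case: ltP => t0; rewrite /= ?mulr1 ?mulr0.
Qed.

Lemma integral_id_mul_sign_cst {mu V} {h : R -> \bar R} {X Y : R} :
  {ae mu, forall t, V t} -> measurable_fun setT h -> mu.-integrable setT (EFin \o id) ->
  (forall t, V t -> 0 < t -> h t = X%:E) -> (forall t, V t -> t <= 0 -> h t = Y%:E) ->
  (\int[mu]_t (t%:E * h t) = (X * mean_pos mu + Y * mean_npos mu)%:E)%E.
Proof.
move=> hV mh imu hX hY.
have ip := integrable_mul_indic measurable_positives imu.
have iN := integrable_mul_indic (measurableC measurable_positives) imu.
have ipX := integrableZl measurableT X ip; have iNY := integrableZl measurableT Y iN.
transitivity (\int[mu]_t
    (X%:E * (t * \1_positives t)%:E + Y%:E * (t * \1_(~` positives) t)%:E))%E.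
  apply: ae_eq_integral => //.
  - by apply: emeasurable_funM => //; apply/measurable_EFinP; exact: measurable_id.
  - by apply: emeasurable_funD; [exact: measurable_int ipX | exact: measurable_int iNY].
  apply: filterS hV => t Vt _; rewrite !indicE in_setC in_positives.
  have [t0|t0] := ltP 0 t.
    by rewrite hX //= mulr1 mulr0 mule0 adde0 -EFinM mulrC.
  by rewrite hY //= mulr1 mulr0 mule0 add0e -EFinM mulrC.
rewrite integralD // !integralZl // /mean_pos /mean_npos EFinD !EFinM !fineK //.
- exact: integrable_fin_num iN.
- exact: integrable_fin_num ip.
Qed.

Lemma interim1_sign_feasible {mu nu V g} {X Y : R} :
  {ae mu, forall t, V t} -> {ae nu, forall t, V t} ->
  measurable_fun setT g -> unit_valued g -> symmetric_fun g ->
  (forall t, V t -> 0 < t -> interim1 nu g t = X%:E) ->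
  (forall t, V t -> t <= 0 -> interim1 mu g t = Y%:E) ->
  X * prob_pos mu <= prob_pos mu * prob_pos nu + Y * (1 - prob_pos nu).
Proof.
move=> hVmu hVnu mg ug sg hX hY; have g0 := unit_valued_ge0 ug.
have := interim1_feasible mu nu _ _ measurable_positives mg ug sg.
rewrite (integral_indic_mul_ae_cst X hVmu measurable_positives
  (measurable_interim1 nu g mg g0)); last by move=> t Vt; rewrite positivesE; exact: hX.
rewrite (integral_indic_mul_ae_cst Y hVnu (measurableC measurable_positives)
  (measurable_interim1 mu g mg g0)); last first.
  by move=> t Vt /=; rewrite positivesE => /negP; rewrite -leNgt; exact: hY.
by rewrite probability_npos !prob_posE -!EFinM -EFinD lee_fin.
Qed.

End SignParts.

Section Symmetrization.
Context {R : realType}.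
Implicit Types (mu nu : probability R R) (V : set R) (g : R * R -> R).

Lemma ae_prod {mu nu V} : {ae mu, forall t, V t} -> {ae nu, forall t, V t} ->
  {ae mu \x nu, forall v, V v.1 /\ V v.2}%E.
Proof.
move=> [S1 [mS1 S10 VS1]] [S2 [mS2 S20 VS2]].
have n1 : (mu \x nu)%E.-negligible (S1 `*` setT).
  exists (S1 `*` setT); split => //; first exact: measurableX.
  by rewrite product_measure1E // [X in (X * _)%E](_ : _ = 0%E) ?mul0e.
have n2 : (mu \x nu)%E.-negligible (setT `*` S2).
  exists (setT `*` S2); split => //; first exact: measurableX.
  by rewrite product_measure1E // [X in (_ * X)%E](_ : _ = 0%E) ?mule0.
apply: negligibleS (negligibleU n1 n2) => -[x y] nVxy.
have [nVx|nVy] : ~ V x \/ ~ V y by exact/not_andP.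
  by left; split => //; exact: VS1.
by right; split => //; exact: VS2.
Qed.

Definition clamp01 (x : R) : R := Num.min (Num.max x 0) 1.

Lemma clamp01_unit x : 0 <= clamp01 x <= 1.
Proof. by rewrite /clamp01 le_min ge_min le_max lexx ler01 lexx /= !orbT. Qed.

Lemma clamp01_id x : 0 <= x <= 1 -> clamp01 x = x.
Proof. by move=> /andP [x0 x1]; rewrite /clamp01 (max_idPl x0) (min_idPl x1). Qed.

Lemma measurable_clamp01 (f : R * R -> R) : measurable_fun setT f ->
  measurable_fun setT (fun v => clamp01 (f v)).
Proof.
move=> mf; apply: measurable_minr; last exact: measurable_cst.
by apply: measurable_maxr => //; exact: measurable_cst.
Qed.

Definition symmetrize g (v : R * R) : R := (clamp01 (g v) + clamp01 (g (v.2, v.1))) / 2.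

Lemma measurable_symmetrize {g} : measurable_fun setT g ->
  measurable_fun setT (symmetrize g).
Proof.
move=> mg; apply: measurable_funM; last exact: measurable_cst.
apply: measurable_funD; first exact: measurable_clamp01.
apply: (measurable_clamp01 (fun v => g (v.2, v.1))).
exact: measurableT_comp mg (measurable_fun_pair measurable_snd measurable_fst).
Qed.

Lemma unit_valued_symmetrize g : unit_valued (symmetrize g).
Proof.
move=> v; have /andP [a0 a1] := clamp01_unit (g v).
have /andP [b0 b1] := clamp01_unit (g (v.2, v.1)).
by rewrite divr_ge0 ?addr_ge0 //= ler_pdivrMr //; lra.
Qed.

Lemma symmetric_symmetrize g : symmetric_fun (symmetrize g).
Proof. by move=> x y; rewrite /symmetrize /= addrC. Qed.

Lemma symmetrize_id {V g x y} : is_SCF V g -> anonymous V g -> V x -> V y ->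
  symmetrize g (x, y) = g (x, y).
Proof.
move=> [_ g01] an Vx Vy; rewrite /symmetrize /= -an // !clamp01_id ?g01 //.
by field.
Qed.

Lemma welfare_symmetrize {mu nu V g} :
  {ae mu, forall t, V t} -> {ae nu, forall t, V t} -> is_SCF V g -> anonymous V g ->
  welfare mu nu (symmetrize g) = welfare mu nu g.
Proof.
move=> hVmu hVnu sc an; have mg := sc.1.
have msum : measurable_fun setT (fun v : R * R => v.1 + v.2).
  by apply: measurable_funD; [exact: measurable_fst | exact: measurable_snd].
rewrite /welfare; apply: ae_eq_integral => //.
- apply/measurable_EFinP; apply: measurable_funM => //.
  exact: measurable_symmetrize.
- by apply/measurable_EFinP; exact: measurable_funM.
apply: filterS (ae_prod hVmu hVnu) => -[x y] /= [Vx Vy] _.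
by rewrite (symmetrize_id sc an Vx Vy).
Qed.

Lemma interim1_symmetrize {nu V g t} : {ae nu, forall t, V t} ->
  is_SCF V g -> anonymous V g -> V t ->
  interim1 nu (symmetrize g) t = interim1 nu g t.
Proof.
move=> hV sc an Vt; have mg := sc.1.
apply: ae_eq_integral => //.
- by apply/measurable_EFinP; exact: measurable_section1 (measurable_symmetrize mg).
- by apply/measurable_EFinP; exact: measurable_section1.
by apply: filterS hV => y Vy _; rewrite (symmetrize_id sc an Vt Vy).
Qed.

Lemma interim2_symmetrize {mu V g t} : {ae mu, forall t, V t} ->
  is_SCF V g -> anonymous V g -> V t ->
  interim1 mu (symmetrize g) t = interim2 mu g t.
Proof.
move=> hV sc an Vt; have mg := sc.1.
rewrite -interim2_sym; last exact: symmetric_symmetrize.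
apply: ae_eq_integral => //.
- by apply/measurable_EFinP; apply: measurable_section2; exact: measurable_symmetrize.
- by apply/measurable_EFinP; exact: measurable_section2.
by apply: filterS hV => x Vx _; rewrite (symmetrize_id sc an Vx Vt).
Qed.

Lemma BIC_symmetrize {mu nu V g} :
  {ae mu, forall t, V t} -> {ae nu, forall t, V t} -> is_SCF V g -> anonymous V g ->
  BIC V mu nu g -> BIC V mu nu (symmetrize g).
Proof.
move=> hVmu hVnu sc an [bic1 bic2]; split => v v' Vv Vv'.
  by rewrite !(interim1_symmetrize hVnu sc an) //; exact: bic1.
rewrite interim2_sym; last exact: symmetric_symmetrize.
by rewrite !(interim2_symmetrize hVmu sc an) //; exact: bic2.
Qed.

End Symmetrization.

(* The welfare of a symmetric rule whose interim probability is [x_i] on positive and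
   [y_i] on non-positive types of agent [i], with [a_i = E (v_i; v_i > 0)] and
   [b_i = E (v_i; v_i <= 0)]. *)
Definition sign_welfare {R : pzRingType} (a1 b1 a2 b2 x1 y1 x2 y2 : R) :=
  x1 * a1 + y1 * b1 + (x2 * a2 + y2 * b2).

Section LinearBound.
Context {R : realFieldType} {a1 b1 a2 b2 p1 p2 X1 Y1 X2 Y2 : R}.
Local Notation sign_welfare := (sign_welfare a1 b1 a2 b2).

(* The lottery [l f^(1) + (1 - l) f^(2)] has interim probabilities
   [p2 + l (1 - p2)], [l p2] for agent 1 and [p1 + l (1 - p1)], [l p1] for agent 2;
   here [p_i] is the probability that [v_i > 0]. *)
Lemma lottery_dominates :
  0 < p1 < 1 -> 0 < p2 < 1 -> X1 <= 1 -> X2 <= 1 -> 0 <= Y1 -> 0 <= Y2 ->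
  X1 * p2 <= p2 * p2 + Y1 * (1 - p2) -> X2 * p1 <= p1 * p1 + Y2 * (1 - p1) ->
  X1 * p1 <= p1 * p2 + Y2 * (1 - p2) -> X2 * p2 <= p2 * p1 + Y1 * (1 - p1) ->
  exists2 l, 0 <= l <= 1 &
  [/\ X1 <= p2 + l * (1 - p2), X2 <= p1 + l * (1 - p1), l * p2 <= Y1 & l * p1 <= Y2].
Proof.
move=> /andP [p10 p11] /andP [p20 p21] X11 X21 Y10 Y20 f22 f11 f12 f21.
have q1 : 0 < 1 - p1 by lra.
have q2 : 0 < 1 - p2 by lra.
pose u1 := (X1 - p2) / (1 - p2); pose u2 := (X2 - p1) / (1 - p1).
pose l := Num.max 0 (Num.max u1 u2).
have lY1 : l <= Y1 / p2.
  rewrite /l !ge_max; apply/and3P; split.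
  - by rewrite divr_ge0 // ltW.
  - by rewrite /u1 ler_pdivrMr // mulrAC ler_pdivlMr //; lra.
  - by rewrite /u2 ler_pdivrMr // mulrAC ler_pdivlMr //; lra.
have lY2 : l <= Y2 / p1.
  rewrite /l !ge_max; apply/and3P; split.
  - by rewrite divr_ge0 // ltW.
  - by rewrite /u1 ler_pdivrMr // mulrAC ler_pdivlMr //; lra.
  - by rewrite /u2 ler_pdivrMr // mulrAC ler_pdivlMr //; lra.
have l1 : l <= 1.
  rewrite /l !ge_max; apply/and3P; split => //.
  - by rewrite /u1 ler_pdivrMr //; lra.
  - by rewrite /u2 ler_pdivrMr //; lra.
have lu1 : u1 <= l by rewrite /l !le_max lexx orbT.
have lu2 : u2 <= l by rewrite /l !le_max lexx !orbT.
exists l; first by rewrite l1 le_max lexx.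
split; last 2 first.
- by rewrite -ler_pdivlMr.
- by rewrite -ler_pdivlMr.
- by move: lu1; rewrite /u1 ler_pdivrMr //; lra.
- by move: lu2; rewrite /u2 ler_pdivrMr //; lra.
Qed.

Lemma sign_welfare_le_max {l : R} : 0 <= l <= 1 ->
  0 <= a1 -> b1 <= 0 -> 0 <= a2 -> b2 <= 0 ->
  X1 <= p2 + l * (1 - p2) -> X2 <= p1 + l * (1 - p1) -> l * p2 <= Y1 -> l * p1 <= Y2 ->
  sign_welfare X1 Y1 X2 Y2 <= Num.max (sign_welfare 1 p2 1 p1) (sign_welfare p2 0 p1 0).
Proof.
move=> /andP [l0 l1] a10 b10 a20 b20 hX1 hX2 hY1 hY2.
set W1 := sign_welfare 1 p2 1 p1; set W2 := sign_welfare p2 0 p1 0.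
have dom : sign_welfare X1 Y1 X2 Y2 <=
    sign_welfare (p2 + l * (1 - p2)) (l * p2) (p1 + l * (1 - p1)) (l * p1).
  by apply: lerD; apply: lerD;
    [exact: ler_wpM2r | exact: ler_wnM2r | exact: ler_wpM2r | exact: ler_wnM2r].
have eW : sign_welfare (p2 + l * (1 - p2)) (l * p2) (p1 + l * (1 - p1)) (l * p1) =
    l * W1 + (1 - l) * W2 by rewrite /W1 /W2 /sign_welfare; ring.
have m1 : l * W1 <= l * Num.max W1 W2 by rewrite ler_wpM2l // le_max lexx.
have m2 : (1 - l) * W2 <= (1 - l) * Num.max W1 W2.
  by rewrite ler_wpM2l ?subr_ge0 // le_max lexx orbT.
lra.
Qed.

End LinearBound.

Section IncentiveCompatibility.
Context {R : realType}.
Implicit Types (mu nu : probability R R) (V : set R) (g : R * R -> R).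

Lemma ic_sign_cst {V} {I : R -> R} {t1 s1 : R} : ~ V 0 ->
  (forall v v', V v -> V v' -> v * I v' <= v * I v) ->
  V t1 -> 0 < t1 -> V s1 -> s1 <= 0 ->
  (forall t, V t -> 0 < t -> I t = I t1) /\ (forall t, V t -> t <= 0 -> I t = I s1).
Proof.
move=> nV0 ic Vt1 t10 Vs1 s10.
have neq0 t : V t -> (t < 0) = (t <= 0).
  by move=> Vt; rewrite lt_neqAle (_ : t != 0) //; apply/eqP => t0; apply: nV0; rewrite -t0.
have s1n : s1 < 0 by rewrite neq0.
split => t Vt t0; apply/eqP; rewrite eq_le.
  by rewrite -(ler_pM2l t10) ic //= -(ler_pM2l t0) ic.
have tn : t < 0 by rewrite neq0.
by rewrite -(ler_nM2l tn) ic //= -(ler_nM2l s1n) ic.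
Qed.

Lemma interim1_sign_cst {V nu g} {t1 s1 : R} : ~ V 0 ->
  measurable_fun setT g -> unit_valued g ->
  (forall v v', V v -> V v' -> (v%:E * interim1 nu g v' <= v%:E * interim1 nu g v)%E) ->
  V t1 -> 0 < t1 -> V s1 -> s1 <= 0 ->
  (forall t, V t -> 0 < t -> interim1 nu g t = (fine (interim1 nu g t1))%:E) /\
  (forall t, V t -> t <= 0 -> interim1 nu g t = (fine (interim1 nu g s1))%:E).
Proof.
move=> nV0 mg ug bic Vt1 t10 Vs1 s10.
have ic v v' : V v -> V v' ->
    v * fine (interim1 nu g v') <= v * fine (interim1 nu g v).
  by move=> Vv Vv'; rewrite -lee_fin !EFinM -!interim1_fineK //; exact: bic.
have [cpos cnpos] := ic_sign_cst nV0 ic Vt1 t10 Vs1 s10.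
split => t Vt t0; rewrite interim1_fineK //; congr EFin.
  exact: cpos.
exact: cnpos.
Qed.

Lemma mul_sign_step_le (c d v w : R) : d <= c -> v != 0 ->
  v * (if 0 < w then c else d) <= v * (if 0 < v then c else d).
Proof.
move=> dc v0; case: (ltgtP v 0) => [vn|vp|/eqP]; last by rewrite (negbTE v0).
- by rewrite ler_nM2l //; case: ifP.
- by rewrite ler_pM2l //; case: ifP.
Qed.

Lemma BIC_sign_step V mu nu g (c1 d1 c2 d2 : R) : ~ V 0 -> symmetric_fun g ->
  d1 <= c1 -> (forall t, interim1 nu g t = (if 0 < t then c1 else d1)%:E) ->
  d2 <= c2 -> (forall t, interim1 mu g t = (if 0 < t then c2 else d2)%:E) ->
  BIC V mu nu g.
Proof.
move=> nV0 sg dc1 h1 dc2 h2.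
have neq0 v : V v -> v != 0 by move=> Vv; apply/eqP => v0; apply: nV0; rewrite -v0.
split => v v' Vv _; rewrite ?interim2_sym // ?h1 ?h2 -!EFinM lee_fin;
  exact: mul_sign_step_le (neq0 _ Vv).
Qed.

End IncentiveCompatibility.

Section QualifiedMajority.
Context {R : realType}.
Implicit Types (mu nu : probability R R) (V : set R).

Lemma qmaj1E (v : R * R) :
  qmaj 1 v = \1_positives v.1 + (1 - \1_positives v.1) * \1_positives v.2.
Proof.
rewrite /qmaj /nb_pos !indicE !in_positives.
by case: (0 < v.1); case: (0 < v.2); rewrite /= ?subrr ?mul0r ?addr0 ?subr0 ?mul1r ?add0r.
Qed.

Lemma qmaj2E (v : R * R) : qmaj 2 v = \1_positives v.1 * \1_positives v.2.
Proof.
rewrite /qmaj /nb_pos !indicE !in_positives.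
by case: (0 < v.1); case: (0 < v.2); rewrite /= ?mul0r ?mul1r.
Qed.

Let measurable_indic_fst : measurable_fun setT (fun v : R * R => \1_positives v.1 : R).
Proof. exact: measurableT_comp (measurable_indic measurable_positives) measurable_fst. Qed.

Let measurable_indic_snd : measurable_fun setT (fun v : R * R => \1_positives v.2 : R).
Proof. exact: measurableT_comp (measurable_indic measurable_positives) measurable_snd. Qed.

Lemma measurable_qmaj1 : measurable_fun setT (qmaj 1 : R * R -> R).
Proof.
have -> : qmaj 1 = fun v : R * R =>
    \1_positives v.1 + (1 - \1_positives v.1) * \1_positives v.2.
  by apply/funext => v; exact: qmaj1E.
apply: measurable_funD => //; apply: measurable_funM => //.
exact: measurable_funB.
Qed.

Lemma measurable_qmaj2 : measurable_fun setT (qmaj 2 : R * R -> R).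
Proof.
have -> : qmaj 2 = fun v : R * R => \1_positives v.1 * \1_positives v.2.
  by apply/funext => v; exact: qmaj2E.
exact: measurable_funM.
Qed.

Lemma unit_valued_qmaj k : unit_valued (qmaj k : R * R -> R).
Proof. by move=> v; rewrite /qmaj; case: ifP; rewrite /= ?lexx ?ler01. Qed.

Lemma symmetric_qmaj k : symmetric_fun (qmaj k : R * R -> R).
Proof. by move=> x y; rewrite /qmaj /nb_pos /= addnC. Qed.

Lemma ordinal_qmaj V k : ordinal_scf V (qmaj k : R * R -> R).
Proof. by move=> v w _ _ _ _ e1 e2; rewrite /qmaj /nb_pos e1 e2. Qed.

Lemma interim1_qmaj1 nu t :
  interim1 nu (qmaj 1) t = (if 0 < t then 1 else prob_pos nu)%:E.
Proof.
rewrite /interim1; under eq_integral => y _ do rewrite qmaj1E /= indicE in_positives.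
case: ifP => t0 /=.
  under eq_integral => y _ do rewrite subrr mul0r addr0.
  exact: integral_cst_probability.
under eq_integral => y _ do rewrite subr0 mul1r add0r.
rewrite integral_indic ?setIT; [exact: prob_posE | done | exact: measurable_positives].
Qed.

Lemma interim1_qmaj2 nu t :
  interim1 nu (qmaj 2) t = (if 0 < t then prob_pos nu else 0)%:E.
Proof.
rewrite /interim1; under eq_integral => y _ do rewrite qmaj2E /= indicE in_positives.
case: ifP => t0 /=.
  under eq_integral => y _ do rewrite mul1r.
  rewrite integral_indic ?setIT; [exact: prob_posE | done | exact: measurable_positives].
under eq_integral => y _ do rewrite mul0r.
exact: integral_cst_probability.
Qed.

Lemma qmaj1_admissible {V} mu nu : ~ V 0 ->
  [/\ is_SCF V (qmaj 1), anonymous V (qmaj 1) & BIC V mu nu (qmaj 1)].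
Proof.
move=> nV0; split.
- by split=> [|v _ _]; [exact: measurable_qmaj1 | exact: unit_valued_qmaj].
- by move=> x y _ _; exact: symmetric_qmaj.
- exact: BIC_sign_step nV0 (symmetric_qmaj 1) (prob_pos_le1 nu) (interim1_qmaj1 nu)
    (prob_pos_le1 mu) (interim1_qmaj1 mu).
Qed.

Lemma qmaj2_admissible {V} mu nu : ~ V 0 ->
  [/\ is_SCF V (qmaj 2), anonymous V (qmaj 2) & BIC V mu nu (qmaj 2)].
Proof.
move=> nV0; split.
- by split=> [|v _ _]; [exact: measurable_qmaj2 | exact: unit_valued_qmaj].
- by move=> x y _ _; exact: symmetric_qmaj.
- exact: BIC_sign_step nV0 (symmetric_qmaj 2) (prob_pos_ge0 nu) (interim1_qmaj2 nu)
    (prob_pos_ge0 mu) (interim1_qmaj2 mu).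
Qed.

End QualifiedMajority.

Section Optimality.
Context {R : realType}.
Implicit Types (mu nu : probability R R) (V : set R) (g : R * R -> R).

Lemma welfare_sign_cst {mu nu V g} {X1 Y1 X2 Y2 : R} :
  {ae mu, forall t, V t} -> {ae nu, forall t, V t} ->
  mu.-integrable setT (EFin \o id) -> nu.-integrable setT (EFin \o id) ->
  measurable_fun setT g -> unit_valued g -> symmetric_fun g ->
  (forall t, V t -> 0 < t -> interim1 nu g t = X1%:E) ->
  (forall t, V t -> t <= 0 -> interim1 nu g t = Y1%:E) ->
  (forall t, V t -> 0 < t -> interim1 mu g t = X2%:E) ->
  (forall t, V t -> t <= 0 -> interim1 mu g t = Y2%:E) ->
  welfare mu nu g = (sign_welfare (mean_pos mu) (mean_npos mu) (mean_pos nu) (mean_npos nu)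
                       X1 Y1 X2 Y2)%:E.
Proof.
move=> hVmu hVnu imu inu mg ug sg h1 h2 h3 h4; have g0 := unit_valued_ge0 ug.
rewrite welfare_interimE //.
rewrite (integral_id_mul_sign_cst hVmu (measurable_interim1 nu g mg g0) imu h1 h2).
by rewrite (integral_id_mul_sign_cst hVnu (measurable_interim1 mu g mg g0) inu h3 h4).
Qed.

Context {G1 G2 : probability R R}.
Hypothesis hG : standing G1 G2.

Local Notation V := (dsupport G1).
Local Notation p1 := (prob_pos G1).
Local Notation p2 := (prob_pos G2).
Local Notation W1 :=
  (sign_welfare (mean_pos G1) (mean_npos G1) (mean_pos G2) (mean_npos G2) 1 p2 1 p1).
Local Notation W2 :=
  (sign_welfare (mean_pos G1) (mean_npos G1) (mean_pos G2) (mean_npos G2) p2 0 p1 0).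

Let V_ae1 : {ae G1, forall t, V t}.
Proof. exact: dsupport_ae. Qed.

Let V_ae2 : {ae G2, forall t, V t}.
Proof. by case: hG => -> *; exact: dsupport_ae. Qed.

Let V_not0 : ~ V 0.
Proof. by case: hG. Qed.

Let integrable1 : G1.-integrable setT (EFin \o id).
Proof. by case: hG => _ _ []. Qed.

Let integrable2 : G2.-integrable setT (EFin \o id).
Proof. by case: hG => _ _ []. Qed.

Let p1_bounds : 0 < p1 < 1.
Proof. by case: hG => _ _ _ + _; rewrite -lte_fin -[_ < 1]lte_fin -prob_posE. Qed.

Let p2_bounds : 0 < p2 < 1.
Proof. by case: hG => _ _ _ _; rewrite -lte_fin -[_ < 1]lte_fin -prob_posE. Qed.

Let V_pos : exists2 t, V t & 0 < t.
Proof.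
have [|t [Vt]] := ae_exists V_ae1 measurable_positives.
  by rewrite prob_posE lte_fin; case/andP: p1_bounds.
by rewrite positivesE; exists t.
Qed.

Let V_npos : exists2 t, V t & t <= 0.
Proof.
have [|t [Vt]] := ae_exists V_ae1 (measurableC measurable_positives).
  by rewrite probability_npos lte_fin subr_gt0; case/andP: p1_bounds.
by rewrite /= positivesE => /negP; rewrite -leNgt; exists t.
Qed.

Lemma welfare_qmaj1 : welfare G1 G2 (qmaj 1) = W1%:E.
Proof.
apply: (welfare_sign_cst V_ae1 V_ae2) => //;
  [exact: measurable_qmaj1 | exact: unit_valued_qmaj | exact: symmetric_qmaj | ..];
  by move=> t _ t0; rewrite interim1_qmaj1 ?t0 // ifN // -leNgt.
Qed.

Lemma welfare_qmaj2 : welfare G1 G2 (qmaj 2) = W2%:E.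
Proof.
apply: (welfare_sign_cst V_ae1 V_ae2) => //;
  [exact: measurable_qmaj2 | exact: unit_valued_qmaj | exact: symmetric_qmaj | ..];
  by move=> t _ t0; rewrite interim1_qmaj2 ?t0 // ifN // -leNgt.
Qed.

Lemma welfare_le_qmaj {g} : is_SCF V g -> anonymous V g -> BIC V G1 G2 g ->
  (welfare G1 G2 g <= (Num.max W1 W2)%:E)%E.
Proof.
move=> sc an bic; set h := symmetrize g.
have mh : measurable_fun setT h := measurable_symmetrize sc.1.
have uh := unit_valued_symmetrize g; have sh := symmetric_symmetrize g.
have [bic1 bic2] := BIC_symmetrize V_ae1 V_ae2 sc an bic.
rewrite interim2_sym // in bic2.
have [t1 Vt1 t1_gt0] := V_pos; have [s1 Vs1 s1_le0] := V_npos.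
have [X1E Y1E] := interim1_sign_cst V_not0 mh uh bic1 Vt1 t1_gt0 Vs1 s1_le0.
have [X2E Y2E] := interim1_sign_cst V_not0 mh uh bic2 Vt1 t1_gt0 Vs1 s1_le0.
have fine_le1 mu t : fine (interim1 mu h t) <= 1.
  by rewrite -lee_fin -interim1_fineK // interim1_le1.
have fine_ge0 mu t : 0 <= fine (interim1 mu h t).
  by rewrite -lee_fin -interim1_fineK //; exact: interim1_ge0 (unit_valued_ge0 uh).
rewrite -(welfare_symmetrize V_ae1 V_ae2 sc an).
rewrite (welfare_sign_cst V_ae1 V_ae2 integrable1 integrable2 mh uh sh X1E Y1E X2E Y2E).
have [l l01 [hX1 hX2 hY1 hY2]] := lottery_dominates p1_bounds p2_bounds
  (fine_le1 _ _) (fine_le1 _ _) (fine_ge0 _ _) (fine_ge0 _ _)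
  (interim1_sign_feasible V_ae2 V_ae2 mh uh sh X1E Y1E)
  (interim1_sign_feasible V_ae1 V_ae1 mh uh sh X2E Y2E)
  (interim1_sign_feasible V_ae1 V_ae2 mh uh sh X1E Y2E)
  (interim1_sign_feasible V_ae2 V_ae1 mh uh sh X2E Y1E).
rewrite lee_fin; apply: sign_welfare_le_max l01 _ _ _ _ hX1 hX2 hY1 hY2.
- exact: mean_pos_ge0.
- exact: mean_npos_le0.
- exact: mean_pos_ge0.
- exact: mean_npos_le0.
Qed.

Lemma qmaj_solves_OPT : solves_OPT V G1 G2 (qmaj 1) \/ solves_OPT V G1 G2 (qmaj 2).
Proof.
have [S1 A1 B1] := qmaj1_admissible G1 G2 V_not0.
have [S2 A2 B2] := qmaj2_admissible G1 G2 V_not0.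
have [W21|W12] := leP W2 W1; [left | right]; split => // g sc an bic;
  apply: le_trans (welfare_le_qmaj sc an bic) _.
- by rewrite welfare_qmaj1 lee_fin (max_idPl W21).
- by rewrite welfare_qmaj2 lee_fin (max_idPr (ltW W12)).
Qed.

End Optimality.

Theorem theorem1 (R : realType) (G1 G2 : probability R R) :
  standing G1 G2 ->
  (solves_OPT (dsupport G1) G1 G2 (qmaj 1) \/ solves_OPT (dsupport G1) G1 G2 (qmaj 2)) /\
  (exists f, ordinal_scf (dsupport G1) f /\ solves_OPT (dsupport G1) G1 G2 f).
Proof.
move=> hG; have opt := qmaj_solves_OPT hG; split => //.
by case: opt => [opt1|opt2]; [exists (qmaj 1) | exists (qmaj 2)]; split => //;
  exact: ordinal_qmaj.
Qed.
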